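(* The finitary symmetric group $\mathrm{FS}(\mathbb{N})$ is a proper subgroup of the bi-immune symmetric group $G_{\mathfrak{B}}$.
   Context: $\mathbb{N}$ denotes the non-negative integers, and $\mathrm{Sym}(\mathbb{N})$ the group of all permutations of $\mathbb{N}$ under composition ($g \circ f$ means apply $f$ first). The support of $\sigma \in \mathrm{Sym}(\mathbb{N})$ is $\{n : \sigma(n) \neq n\}$; $\mathrm{FS}(\mathbb{N})$ is the group of permutations with finite support. For $i \in \mathbb{N}$, $\sigma_{(i)}$ is the permutation swapping $i$ and $i+1$ and fixing all other numbers. For $A \subseteq \mathbb{N}$ with increasing enumeration $a_0 < a_1 < \cdots$, define $\sigma_A(x) = \lim_{n \to \infty} (\sigma_{(a_0)} \circ \sigma_{(a_1)} \circ \cdots \circ \sigma_{(a_n)})(x)$ (eventually constant for each $x$). A set $A$ is immune if it is infinite and contains no infinite computably enumerable subset; $A$ is bi-immune if both $A$ and $\mathbb{N} - A$ are immune. For bi-immune $A$, $\sigma_A$ is a permutation of $\mathbb{N}$. The bi-immune symmetric group $G_{\mathfrak{B}}$ is the subgroup of $\mathrm{Sym}(\mathbb{N})$ generated by $\{\sigma_A : A \text{ bi-immune}\}$. *)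

From Stdlib Require Import Arith List.
Import ListNotations.

Inductive PR : Type :=
| PZero : PR
| PSucc : PR
| PProj : nat -> PR
| PComp : PR -> list PR -> PR
| PRec  : PR -> PR -> PR           (* primitive recursion on the first argument *)
| PMin  : PR -> PR.                (* unbounded minimisation on the first argument *)

Inductive eval : PR -> list nat -> nat -> Prop :=
| ev_zero : forall v, eval PZero v 0
| ev_succ : forall x v, eval PSucc (x :: v) (S x)
| ev_proj : forall i v, i < length v -> eval (PProj i) v (nth i v 0)
| ev_comp : forall f gs v ws y,
    evals gs v ws -> eval f ws y -> eval (PComp f gs) v y
| ev_rec0 : forall f g v y, eval f v y -> eval (PRec f g) (0 :: v) y
| ev_recS : forall f g n v z y,
    eval (PRec f g) (n :: v) z -> eval g (n :: z :: v) y ->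
    eval (PRec f g) (S n :: v) y
| ev_min : forall f v n,
    eval f (n :: v) 0 ->
    (forall m, m < n -> exists k, eval f (m :: v) (S k)) ->
    eval (PMin f) v n
with evals : list PR -> list nat -> list nat -> Prop :=
| evs_nil : forall v, evals [] v []
| evs_cons : forall g gs v w ws,
    eval g v w -> evals gs v ws -> evals (g :: gs) v (w :: ws).

Definition natset := nat -> Prop.

Definition ce (A : natset) : Prop :=
  exists e : PR, forall n, A n <-> exists y, eval e [n] y.

Definition infinite (A : natset) : Prop :=
  forall m, exists n, m <= n /\ A n.

Definition immune (A : natset) : Prop :=
  infinite A /\
  ~ (exists B : natset, (forall n, B n -> A n) /\ infinite B /\ ce B).

Definition bi_immune (A : natset) : Prop :=
  immune A /\ immune (fun n => ~ A n).

Definition swap (i x : nat) : nat :=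
  if Nat.eqb x i then S i else if Nat.eqb x (S i) then i else x.

(** [partial_prod A m x y] : F_m(x) = y where F_0 = id and
    F_(m+1) = F_m o sigma_(m) if m in A, F_m otherwise; thus for
    a_0 < ... < a_n the elements of A below m,
    F_m = sigma_(a_0) o ... o sigma_(a_n). *)
Inductive partial_prod (A : natset) : nat -> nat -> nat -> Prop :=
| pp0 : forall x, partial_prod A 0 x x
| ppin : forall m x y, A m -> partial_prod A m (swap m x) y ->
    partial_prod A (S m) x y
| ppout : forall m x y, ~ A m -> partial_prod A m x y ->
    partial_prod A (S m) x y.

(** [sigma_is A x y] : sigma_A(x) = y, i.e. the partial products
    are eventually constant with value y at x. *)
Definition sigma_is (A : natset) (x y : nat) : Prop :=
  exists N, forall m, N <= m -> partial_prod A m x y.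

Definition bijective (f : nat -> nat) : Prop :=
  (forall x y, f x = f y -> x = y) /\ (forall y, exists x, f x = y).

Definition finitary (f : nat -> nat) : Prop :=
  bijective f /\ exists N, forall n, N <= n -> f n = n.

(** G_B: subgroup of Sym(N) generated by the sigma_A, A bi-immune:
    closure of the identity under left multiplication by generators
    and their inverses (functions taken up to extensional equality). *)
Inductive in_GB : (nat -> nat) -> Prop :=
| gb_id : in_GB (fun x => x)
| gb_ext : forall g h, in_GB g -> (forall x, g x = h x) -> in_GB h
| gb_mul : forall A g h, bi_immune A -> in_GB g ->
    (forall x, sigma_is A (g x) (h x)) -> in_GB h
| gb_inv : forall A g h, bi_immune A -> in_GB g ->
    (forall x, sigma_is A (h x) (g x)) -> in_GB h.         (* h = sigma_A^-1 o g *)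

From Stdlib Require Import Arith List Lia Cantor Classical ClassicalEpsilon.
Import ListNotations.

(** The one nontrivial ingredient is a supply of bi-immune sets, obtained by
    diagonalization: enumerate the programs and, at stage n, pick two fresh
    points lo_n < hi_n lying in the domain of the n-th program whenever that
    domain is infinite.  Every set containing all lo_n and no hi_n is then
    bi-immune, and the construction can be started above any bound K.

    Inclusion: if B is such a set above i+2, then B ∪ {i} is again one, and
    σ_(B ∪ {i}) = σ_B ∘ σ_(i).  Hence σ_(i) ∘ g = σ_B^-1 ∘ σ_(B ∪ {i}) ∘ g, so
    G_B is closed under left multiplication by adjacent transpositions, and a
    finitary permutation is a product of these (move the value at the top of
    its support into place and recurse).
    Properness: σ_A maps each a ∈ A to a+1, so it has infinite support as soon
    as A is infinite, e.g. bi-immune. *)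

Definition injective (f : nat -> nat) : Prop := forall x y, f x = f y -> x = y.

(** Case analysis on the equality tests of (possibly nested) [swap]s,
    innermost tests first. *)
Ltac swap_cases :=
  let atomic t := lazymatch t with context [if _ then _ else _] => fail | _ => idtac end in
  unfold swap;
  repeat match goal with |- context [Nat.eqb ?a ?b] =>
    atomic a; atomic b; destruct (Nat.eqb_spec a b) end;
  try lia.

Lemma swap_involutive i x : swap i (swap i x) = x.
Proof. swap_cases. Qed.

Lemma swap_outside i x : x <> i -> x <> S i -> swap i x = x.
Proof. intros. swap_cases. Qed.

Lemma swap_at i : swap i i = S i.
Proof. swap_cases. Qed.

Lemma swap_comm i m x : S (S i) <= m -> swap i (swap m x) = swap m (swap i x).
Proof. intros. swap_cases. Qed.

Fixpoint prefix_prod (A : natset) (m x : nat) : nat :=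
  match m with
  | 0 => x
  | S m' =>
      if excluded_middle_informative (A m') then prefix_prod A m' (swap m' x)
      else prefix_prod A m' x
  end.

Lemma partial_prod_prefix_prod A m x : partial_prod A m x (prefix_prod A m x).
Proof.
  revert x; induction m as [|m IH]; intro x; simpl.
  - constructor.
  - destruct (excluded_middle_informative (A m)).
    + apply ppin; auto.
    + apply ppout; auto.
Qed.

(** Transpositions σ_(j) with j < x fix x. *)
Lemma prefix_prod_above A m x : m < x -> prefix_prod A m x = x.
Proof.
  revert x; induction m as [|m IH]; intros x Hx; simpl; auto.
  rewrite (swap_outside m x) by lia.
  destruct (excluded_middle_informative (A m)); apply IH; lia.
Qed.

(** Transpositions σ_(j) with j > x fix x, so the products stabilize at x. *)
Lemma prefix_prod_stable A m x : x < m -> prefix_prod A m x = prefix_prod A (S x) x.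
Proof.
  induction m as [|m IH]; intro Hx; [lia|].
  destruct (Nat.eq_dec m x) as [->|Hmx]; auto.
  simpl. rewrite (swap_outside m x) by lia.
  destruct (excluded_middle_informative (A m)); apply IH; lia.
Qed.

Lemma prefix_prod_ext A A' m x :
  (forall j, j < m -> (A j <-> A' j)) -> prefix_prod A m x = prefix_prod A' m x.
Proof.
  revert x; induction m as [|m IH]; intros x H; simpl; auto.
  assert (Hm : A m <-> A' m) by (apply H; lia).
  destruct (excluded_middle_informative (A m)), (excluded_middle_informative (A' m));
    try tauto; apply IH; intros; apply H; lia.
Qed.

(** σ_A, evaluated at x from the stage where the products have stabilized. *)
Definition sigma (A : natset) (x : nat) : nat := prefix_prod A (S x) x.

Lemma sigma_is_sigma A x : sigma_is A x (sigma A x).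
Proof.
  exists (S x); intros m Hm. unfold sigma.
  rewrite <- (prefix_prod_stable A m x) by lia. apply partial_prod_prefix_prod.
Qed.

Lemma sigma_shift A x : A x -> sigma A x = S x.
Proof.
  intro Ax. unfold sigma; simpl.
  destruct (excluded_middle_informative (A x)) as [_|]; [|contradiction].
  rewrite swap_at. apply prefix_prod_above; lia.
Qed.

Lemma sigma_not_finitary A : infinite A -> ~ finitary (sigma A).
Proof.
  intros HA [_ [N HN]]. destruct (HA N) as [x [Hx Ax]].
  specialize (HN x Hx). rewrite sigma_shift in HN; auto; lia.
Qed.

(** Adding a point i with i, i+1 ∉ B: σ_(B ∪ {i}) = σ_B ∘ σ_(i), because σ_(i)
    commutes with the transpositions σ_(b), b ≥ i+2, applied before it. *)
Lemma prefix_prod_insert (B : natset) i : ~ B i -> ~ B (S i) ->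
  forall m x, S i <= m ->
  prefix_prod (fun y => y = i \/ B y) m x = prefix_prod B m (swap i x).
Proof.
  intros Bi BSi. induction m as [|m IH]; intros x Hm; [lia|].
  destruct (Nat.eq_dec m i) as [->|Hmi]; simpl.
  - destruct (excluded_middle_informative (i = i \/ B i)) as [_|]; [|tauto].
    destruct (excluded_middle_informative (B i)) as [|_]; [tauto|].
    apply prefix_prod_ext. intros j Hj. split; [intros [->|]; [lia|auto] | auto].
  - destruct (excluded_middle_informative (m = i \/ B m)) as [[|Bm]|nBm]; [lia| |].
    + destruct (excluded_middle_informative (B m)) as [_|]; [|tauto].
      assert (m <> S i) by (intros ->; tauto).
      rewrite IH, swap_comm by lia. reflexivity.
    + destruct (excluded_middle_informative (B m)); [tauto|]. apply IH; lia.
Qed.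

Lemma sigma_insert (B : natset) i x : ~ B i -> ~ B (S i) ->
  sigma (fun y => y = i \/ B y) x = sigma B (swap i x).
Proof.
  intros Bi BSi. set (m := S (x + swap i x + i)). unfold sigma.
  rewrite <- (prefix_prod_stable _ m x), <- (prefix_prod_stable _ m (swap i x)) by lia.
  apply prefix_prod_insert; auto; lia.
Qed.

(** * Diagonalizing against a countable family of sets *)

Section Diagonalization.

Variable D : nat -> natset.

Lemma stage_exists M n : exists p : nat * nat,
  M <= fst p < snd p /\ (infinite (D n) -> D n (fst p) /\ D n (snd p)).
Proof.
  destruct (classic (infinite (D n))) as [Hinf|Hfin].
  - destruct (Hinf M) as [a [Ha Da]]. destruct (Hinf (S a)) as [b [Hb Db]].
    exists (a, b); simpl. auto with arith.
  - exists (M, S M); simpl. split; [lia | tauto].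
Qed.

Definition stage (M n : nat) : nat * nat :=
  proj1_sig (constructive_indefinite_description _ (stage_exists M n)).

Lemma stage_spec M n : M <= fst (stage M n) < snd (stage M n) /\
  (infinite (D n) -> D n (fst (stage M n)) /\ D n (snd (stage M n))).
Proof. exact (proj2_sig (constructive_indefinite_description _ (stage_exists M n))). Qed.

(** [floor K n]: the lower bound for stage n when starting above K. *)
Fixpoint floor (K n : nat) : nat :=
  match n with 0 => K | S n' => S (snd (stage (floor K n') n')) end.

Definition lo (K n : nat) : nat := fst (stage (floor K n) n).
Definition hi (K n : nat) : nat := snd (stage (floor K n) n).

Lemma lo_hi_bounds K n : floor K n <= lo K n < hi K n /\ hi K n < floor K (S n).
Proof. unfold lo, hi; simpl. pose proof (proj1 (stage_spec (floor K n) n)). lia. Qed.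

Lemma floor_mono K n m : n <= m -> floor K n <= floor K m.
Proof. induction 1; auto. pose proof (lo_hi_bounds K m). lia. Qed.

Lemma lo_ge K n : K + n <= lo K n.
Proof.
  assert (H : K + n <= floor K n).
  { induction n as [|n IH]; simpl; [lia|]. pose proof (lo_hi_bounds K n). simpl in *. lia. }
  pose proof (lo_hi_bounds K n). lia.
Qed.

Lemma lo_ne_hi K m n : lo K m <> hi K n.
Proof.
  pose proof (lo_hi_bounds K m). pose proof (lo_hi_bounds K n).
  destruct (lt_eq_lt_dec m n) as [[Hmn|Hmn]|Hmn].
  - pose proof (floor_mono K (S m) n Hmn). lia.
  - subst. lia.
  - pose proof (floor_mono K (S n) m Hmn). lia.
Qed.

Lemma lo_hi_in_D K n : infinite (D n) -> D n (lo K n) /\ D n (hi K n).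
Proof. apply (stage_spec (floor K n) n). Qed.

Definition separator (K : nat) (S : natset) : Prop :=
  (forall n, S (lo K n)) /\ (forall n, ~ S (hi K n)).

(** A separator and its complement are infinite, and each of them misses a
    point of every infinite D n, so neither contains an infinite member of
    the family. *)
Lemma separator_infinite K S : separator K S -> infinite S /\ infinite (fun x => ~ S x).
Proof.
  intros [Hlo Hhi]. split; intro m.
  - exists (lo K m). pose proof (lo_ge K m). split; auto; lia.
  - exists (hi K m). pose proof (lo_ge K m). pose proof (lo_hi_bounds K m). split; auto; lia.
Qed.

Lemma separator_escapes K S n : separator K S -> infinite (D n) ->
  (exists x, D n x /\ ~ S x) /\ (exists x, D n x /\ ~ ~ S x).
Proof.
  intros [Hlo Hhi] Hinf. destruct (lo_hi_in_D K n Hinf).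
  split; [exists (hi K n) | exists (lo K n)]; auto.
Qed.

End Diagonalization.

(** * Computably enumerable sets form a countable family *)

Definition pair_code (x y : nat) : nat := Cantor.to_nat (x, y).

Lemma pair_code_inj a b c d : pair_code a b = pair_code c d -> a = c /\ b = d.
Proof.
  intro H. assert (E : Cantor.of_nat (pair_code a b) = Cantor.of_nat (pair_code c d))
    by now rewrite H.
  unfold pair_code in E. rewrite !cancel_of_to in E. now injection E.
Qed.

Fixpoint code (e : PR) : nat :=
  match e with
  | PZero => pair_code 0 0
  | PSucc => pair_code 1 0
  | PProj i => pair_code 2 i
  | PComp f gs => pair_code 3 (pair_code (code f)
      ((fix codes (l : list PR) : nat :=
          match l with [] => 0 | g :: l' => S (pair_code (code g) (codes l')) end) gs))
  | PRec f g => pair_code 4 (pair_code (code f) (code g))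
  | PMin f => pair_code 5 (code f)
  end.

Fixpoint code_inj (e1 : PR) : forall e2, code e1 = code e2 -> e1 = e2.
Proof.
  destruct e1 as [| |i|f gs|f g|f]; intros [| |j|f' gs'|f' g'|f'] H; simpl in H;
    apply pair_code_inj in H; destruct H as [Htag H]; try discriminate Htag; try reflexivity.
  - now subst.
  - apply pair_code_inj in H. destruct H as [Hf Hl]. apply code_inj in Hf. subst f'. f_equal.
    revert gs' Hl. induction gs as [|g gs IH]; intros [|g' gs'] Hl;
      try discriminate Hl; try reflexivity.
    injection Hl as Hl. apply pair_code_inj in Hl. destruct Hl as [Hg Hl].
    apply code_inj in Hg. subst g'. f_equal. now apply IH.
  - apply pair_code_inj in H. destruct H as [Hf Hg].
    apply code_inj in Hf. apply code_inj in Hg. now subst.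
  - apply code_inj in H. now subst.
Qed.

(** The n-th c.e. set: the domain of the program with code n (empty if none). *)
Definition ce_family (n : nat) : natset :=
  fun x => exists e, code e = n /\ exists y, eval e [x] y.

Lemma ce_in_family (B : natset) : ce B -> exists n, forall x, B x <-> ce_family n x.
Proof.
  intros [e He]. exists (code e). intro x. rewrite He. split.
  - intro Hy. exists e. auto.
  - intros [e' [Hc Hy]]. apply code_inj in Hc. now subst.
Qed.

Lemma immune_of_escapes (S : natset) : infinite S ->
  (forall n, infinite (ce_family n) -> exists x, ce_family n x /\ ~ S x) -> immune S.
Proof.
  intros HS Hesc. split; auto.
  intros [B [HBS [HBinf HBce]]]. destruct (ce_in_family B HBce) as [n Hn].
  destruct (Hesc n) as [x [Hx HnS]].
  - intro m. destruct (HBinf m) as [y [Hy By]]. exists y. split; auto. now apply Hn.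
  - apply HnS, HBS, Hn, Hx.
Qed.

Lemma separator_bi_immune K S : separator ce_family K S -> bi_immune S.
Proof.
  intro Hsep. destruct (separator_infinite ce_family K S Hsep) as [HS HnS].
  split; apply immune_of_escapes; auto; intros n Hinf;
    apply (separator_escapes ce_family K S n Hsep Hinf).
Qed.

Definition lower (K : nat) : natset := fun x => exists n, x = lo ce_family K n.

Lemma lower_ge K x : lower K x -> K <= x.
Proof. intros [n ->]. pose proof (lo_ge ce_family K n). lia. Qed.

Lemma lower_bi_immune K : bi_immune (lower K).
Proof.
  apply (separator_bi_immune K). split.
  - intro n. now exists n.
  - intros n [m Hm]. exact (lo_ne_hi ce_family K m n (eq_sym Hm)).
Qed.

Lemma lower_insert_bi_immune i : bi_immune (fun x => x = i \/ lower (S (S i)) x).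
Proof.
  apply (separator_bi_immune (S (S i))). split.
  - intro n. right. now exists n.
  - intros n [Hi|[m Hm]].
    + pose proof (lo_ge ce_family (S (S i)) n).
      pose proof (lo_hi_bounds ce_family (S (S i)) n). lia.
    + exact (lo_ne_hi ce_family (S (S i)) m n (eq_sym Hm)).
Qed.

Lemma in_GB_sigma A g : bi_immune A -> in_GB g -> in_GB (fun x => sigma A (g x)).
Proof. intros HA Hg. apply (gb_mul A g); auto. intro x. apply sigma_is_sigma. Qed.

Lemma in_GB_sigma_inv A g h :
  bi_immune A -> in_GB g -> (forall x, sigma A (h x) = g x) -> in_GB h.
Proof. intros HA Hg Hh. apply (gb_inv A g h); auto. intro x. rewrite <- Hh. apply sigma_is_sigma. Qed.

(** σ_(i) ∘ g = σ_B^-1 ∘ σ_(B ∪ {i}) ∘ g with B = lower (i+2). *)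
Lemma in_GB_swap i g : in_GB g -> in_GB (fun x => swap i (g x)).
Proof.
  intro Hg. set (B := lower (S (S i))).
  assert (Bi : ~ B i) by (intro H; apply lower_ge in H; lia).
  assert (BSi : ~ B (S i)) by (intro H; apply lower_ge in H; lia).
  apply (in_GB_sigma_inv B (fun x => sigma (fun y => y = i \/ B y) (g x))).
  - apply lower_bi_immune.
  - apply in_GB_sigma; auto. apply lower_insert_bi_immune.
  - intro x. now rewrite sigma_insert.
Qed.

Lemma top_value_below N f : injective f -> (forall n, S N <= n -> f n = n) -> f N <= N.
Proof.
  intros Hinj Hfix. destruct (le_lt_dec (f N) N) as [|Hlt]; auto.
  assert (f (f N) = f N) by (apply Hfix; lia). apply Hinj in H. lia.
Qed.

(** Inductive step on the support bound: composing with σ_(f N) raises the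
    value at N by one, until f fixes N. *)
Lemma bubble_top N :
  (forall f, injective f -> (forall n, N <= n -> f n = n) -> in_GB f) ->
  forall d f, injective f -> (forall n, S N <= n -> f n = n) -> N - f N = d -> in_GB f.
Proof.
  intros IH d. induction d as [|d IHd]; intros f Hinj Hfix Hd;
    pose proof (top_value_below N f Hinj Hfix) as Htop.
  - apply IH; auto. intros n Hn. destruct (Nat.eq_dec n N) as [->|]; [lia|]. apply Hfix; lia.
  - set (j := f N). set (f1 := fun x => swap j (f x)).
    assert (Hf1 : in_GB f1).
    { apply IHd.
      - intros x y H. apply Hinj.
        rewrite <- (swap_involutive j (f x)), <- (swap_involutive j (f y)). exact (f_equal _ H).
      - intros n Hn. unfold f1. rewrite Hfix by lia. apply swap_outside; lia.
      - unfold f1. fold j. rewrite swap_at. lia. }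
    apply (gb_ext _ _ (in_GB_swap j f1 Hf1)). intro x. apply swap_involutive.
Qed.

Lemma in_GB_bounded_support N :
  forall f, injective f -> (forall n, N <= n -> f n = n) -> in_GB f.
Proof.
  induction N as [|N IH]; intros f Hinj Hfix.
  - apply (gb_ext (fun x => x)); [constructor|]. intro x. symmetry. apply Hfix. lia.
  - exact (bubble_top N IH (N - f N) f Hinj Hfix eq_refl).
Qed.

Theorem lemma2p5 :
  (forall f : nat -> nat, finitary f -> in_GB f) /\
  (exists f : nat -> nat, in_GB f /\ ~ finitary f).
Proof.
  split.
  - intros f [[Hinj _] [N HN]]. exact (in_GB_bounded_support N f Hinj HN).
  - exists (sigma (lower 0)). split.
    + apply (in_GB_sigma (lower 0) (fun x => x)); [apply lower_bi_immune | constructor].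
    + apply sigma_not_finitary. exact (proj1 (proj1 (lower_bi_immune 0))).
Qed.
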